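(* Let $\mathcal M=(Q,s_{in},s_T,s_F,\delta)$ be a Turing machine with input that never moves its input head outside the input tape. There is a closed term ${\tt trans}_{\mathcal M}$ and a constant $c$ such that for every term $k$ and every configuration $C$ with input tape string $i$: (1) if a final configuration $D$ is reachable from $C$ in $n$ transition steps, then ${\tt trans}_{\mathcal M}\,k\,\ulcorner C\urcorner\to_{det}^{m} k\,\ulcorner D\urcorner$ for some $m\le c\,(n+1)\,|i|\log_2|i|$; (2) if no final configuration is reachable from $C$, then ${\tt trans}_{\mathcal M}\,k\,\ulcorner C\urcorner$ diverges, i.e. it admits an infinite $\to_{det}$ reduction sequence.
   Context: Deterministic $\lambda$-calculus $\Lambda_{\tt det}$: terms $t ::= v \mid t\,v$, values $v ::= x\mid \lambda x.t$, evaluation contexts $E ::= [\cdot]\mid E\,v$, and $E[(\lambda x.t)v]\to_{det} E[t\{x:=v\}]$; $\to_{det}^m$ means exactly $m$ steps. Encodings: a character $a_j$ of an ordered alphabet $\Sigma=\{a_1<\dots<a_p\}$ is $\ulcorner a_j\urcorner:=\lambda x_1\ldots\lambda x_p.x_j$; strings over $\Sigma$ are $\ulcorner\varepsilon\urcorner:=\lambda x_1\ldots\lambda x_p.\lambda x_\varepsilon.x_\varepsilon$, $\ulcorner a_j r\urcorner:=\lambda x_1\ldots\lambda x_p.\lambda x_\varepsilon.x_j\ulcorner r\urcorner$. Reversed binary: $\mathrm{bin}(0)=\varepsilon$, for $n>0$ $\mathrm{bin}(n)=b_0\cdots b_\ell$ with $n=\sum_j b_j 2^j$, $b_\ell=1$,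 encoded as a string over $\{0<1\}$. Turing machines with input: $\mathbb B_I=\{0<1<\mathsf L<\mathsf R\}$, $\mathbb B_W=\{0<1<\Box\}$ ($\Box$ blank). A machine is $\mathcal M=(Q,s_{in},s_T,s_F,\delta)$ with finite ordered set of states $Q=\{s_1<\dots<s_m\}$, initial state $s_{in}$, final states $s_T,s_F$, and partial transition function $\delta:\mathbb B_I\times\mathbb B_W\times Q\rightharpoonup\{-1,+1,0\}\times\mathbb B_W\times\{\leftarrow,\rightarrow,\downarrow\}\times Q$, defined on $(b,a,s)$ only if $s\notin\{s_T,s_F\}$. A configuration is $(i,n\mid w_l,a,w_r\mid s)$ with $i=\mathsf L s'\mathsf R$, $s'\in\{0,1\}^*$, the read-only input tape string, $n\in\mathbb N$ the input-head position, $w_l,w_r\in\mathbb B_W^*$ the work tape to the left/right of the work head, $a\in\mathbb B_W$ the work-head cell, $s\in Q$; it is final if $s\in\{s_T,s_F\}$ (final configurations do not evolve). Transition: let $b$ be the character of $i$ at position $n$ (counting from $0$) and $\delta(b,a,s)=(d\mid a',\mu\mid s')$. Then $C\to_{\mathcal M} D$ where $D$ has input position $n+d$, state $s'$, and work part: if $\mu=\downarrow$, $(w_l,a',w_r)$; if $\mu=\leftarrow$ and $w_l=w a''$, $(w,a'',a'w_r)$, and if $w_l=\varepsilon$, $(\varepsilon,\Box,a'w_r)$; if $\mu=\rightarrow$ and $w_r=a''w$, $(w_l a',a'',w)$, and if $w_r=\varepsilon$, $(w_la',\Box,\varepsilon)$. The input string $i$ is unchanged. The encoding of a configuration is $\ulcorner(i,n\mid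 w_l,a,w_r\mid s)\urcorner:=\lambda x.\,x\,\ulcorner i\urcorner\,\ulcorner\mathrm{bin}(n)\urcorner\,\ulcorner w_l^{R}\urcorner\,\ulcorner a\urcorner\,\ulcorner w_r\urcorner\,\ulcorner s\urcorner$, with $i$ encoded as a string over $\mathbb B_I$, $w_l^R$ (reversal of $w_l$) and $w_r$ as strings over $\mathbb B_W$, $a$ as a character of $\mathbb B_W$, $s$ as a character of $Q$. Note $|i|\ge 2$. *)

From Stdlib Require Import Reals ZArith List Arith.
Import ListNotations.

Inductive tm : Type :=
| tval : val -> tm
| tapp : tm -> val -> tm
with val : Type :=
| vvar : nat -> val
| vlam : tm -> val.

Fixpoint shift_t (d c : nat) (t : tm) : tm :=
  match t with
  | tval v => tval (shift_v d c v)
  | tapp t1 v => tapp (shift_t d c t1) (shift_v d c v)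
  end
with shift_v (d c : nat) (v : val) : val :=
  match v with
  | vvar n => if c <=? n then vvar (n + d) else vvar n
  | vlam t => vlam (shift_t d (S c) t)
  end.

Fixpoint subst_t (j : nat) (s : val) (t : tm) : tm :=
  match t with
  | tval v => tval (subst_v j s v)
  | tapp t1 v => tapp (subst_t j s t1) (subst_v j s v)
  end
with subst_v (j : nat) (s : val) (v : val) : val :=
  match v with
  | vvar n => if n =? j then s else if j <? n then vvar (n - 1) else vvar n
  | vlam t => vlam (subst_t (S j) (shift_v 1 0 s) t)
  end.

Inductive ectx : Type :=
| hole : ectx
| eapp : ectx -> val -> ectx.

Fixpoint plug (E : ectx) (t : tm) : tm :=
  match E with
  | hole => t
  | eapp E' v => tapp (plug E' t) v
  end.

Inductive det_step : tm -> tm -> Prop :=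
| det_beta : forall E t v,
    det_step (plug E (tapp (tval (vlam t)) v)) (plug E (subst_t 0 v t)).

Inductive nsteps {A : Type} (R : A -> A -> Prop) : nat -> A -> A -> Prop :=
| nsteps0 : forall x, nsteps R 0 x x
| nstepsS : forall n x y z, R x y -> nsteps R n y z -> nsteps R (S n) x z.

Definition diverges (t : tm) : Prop :=
  exists f : nat -> tm, f 0 = t /\ forall n, det_step (f n) (f (S n)).

Fixpoint closed_t (d : nat) (t : tm) : Prop :=
  match t with
  | tval v => closed_v d v
  | tapp t1 v => closed_t d t1 /\ closed_v d v
  end
with closed_v (d : nat) (v : val) : Prop :=
  match v with
  | vvar n => n < d
  | vlam t => closed_t (S d) t
  end.

Definition closed (t : tm) : Prop := closed_t 0 t.

Fixpoint lams (n : nat) (t : tm) : tm :=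
  match n with
  | 0 => t
  | S n' => tval (vlam (lams n' t))
  end.

(** character a_{j+1} (0-based index j) of an alphabet of size p:
    λx_1...λx_p. x_{j+1} *)
Definition enc_char (p j : nat) : val :=
  vlam (lams (p - 1) (tval (vvar (p - 1 - j)))).

Fixpoint enc_str (p : nat) (s : list nat) : val :=
  match s with
  | [] => vlam (lams p (tval (vvar 0)))
  | j :: r => vlam (lams p (tapp (tval (vvar (p - j))) (enc_str p r)))
  end.

(** reversed binary: least significant bit first, no trailing zeros *)
Fixpoint pos_bits (p : positive) : list nat :=
  match p with
  | xH => [1]
  | xO q => 0 :: pos_bits q
  | xI q => 1 :: pos_bits q
  end.

Definition bin (n : nat) : list nat :=
  match N.of_nat n with
  | N0 => []
  | Npos p => pos_bits p
  end.

Inductive bI : Type := I0 | I1 | IL | IR.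
Inductive bW : Type := W0 | W1 | WB.
Inductive idir : Type := Dm1 | D0 | Dp1.
Inductive wmove : Type := MLeft | MRight | MStay.

Definition bI_idx (b : bI) : nat := match b with I0 => 0 | I1 => 1 | IL => 2 | IR => 3 end.
Definition bW_idx (a : bW) : nat := match a with W0 => 0 | W1 => 1 | WB => 2 end.
Definition idir_Z (d : idir) : Z := match d with Dm1 => (-1)%Z | D0 => 0%Z | Dp1 => 1%Z end.

(** States Q = {s_1 < ... < s_m} are represented by 0-based indices 0..m-1. *)
Record TM : Type := mkTM {
  nstates : nat;
  s_in : nat;
  s_T : nat;
  s_F : nat;
  delta : bI -> bW -> nat -> option (idir * bW * wmove * nat)
}.

Definition valid_TM (M : TM) : Prop :=
  s_in M < nstates M /\ s_T M < nstates M /\ s_F M < nstates M /\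
  forall b a s d a' mu s',
    delta M b a s = Some (d, a', mu, s') ->
    s < nstates M /\ s' < nstates M /\ s <> s_T M /\ s <> s_F M.

Definition input_head_stays (M : TM) : Prop :=
  forall b a s d a' mu s',
    delta M b a s = Some (d, a', mu, s') ->
    (b = IL -> d <> Dm1) /\ (b = IR -> d <> Dp1).

(** configuration (i, n | w_l, a, w_r | s); w_l stored left-to-right *)
Record config : Type := mkConfig {
  c_in : list bI;
  c_pos : nat;
  c_wl : list bW;
  c_a : bW;
  c_wr : list bW;
  c_st : nat
}.

Definition valid_config (M : TM) (C : config) : Prop :=
  (exists s' : list bI, Forall (fun b => b = I0 \/ b = I1) s' /\
                        c_in C = IL :: s' ++ [IR]) /\
  c_pos C < length (c_in C) /\
  c_st C < nstates M.

Definition final (M : TM) (C : config) : Prop :=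
  c_st C = s_T M \/ c_st C = s_F M.

Definition move_work (wl : list bW) (a' : bW) (wr : list bW) (mu : wmove)
  : list bW * bW * list bW :=
  match mu with
  | MStay => (wl, a', wr)
  | MLeft =>
      match rev wl with
      | [] => ([], WB, a' :: wr)
      | a'' :: w => (rev w, a'', a' :: wr)
      end
  | MRight =>
      match wr with
      | [] => (wl ++ [a'], WB, [])
      | a'' :: w => (wl ++ [a'], a'', w)
      end
  end.

Inductive tm_step (M : TM) : config -> config -> Prop :=
| tm_step_intro : forall i n wl a wr s b d a' mu s' n' wl2 a2 wr2,
    nth_error i n = Some b ->
    delta M b a s = Some (d, a', mu, s') ->
    Z.of_nat n' = (Z.of_nat n + idir_Z d)%Z ->
    move_work wl a' wr mu = (wl2, a2, wr2) ->
    tm_step M (mkConfig i n wl a wr s) (mkConfig i n' wl2 a2 wr2 s').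

Definition enc_config (M : TM) (C : config) : val :=
  vlam (tapp (tapp (tapp (tapp (tapp (tapp (tval (vvar 0))
    (enc_str 4 (map bI_idx (c_in C))))
    (enc_str 2 (bin (c_pos C))))
    (enc_str 3 (map bW_idx (rev (c_wl C)))))
    (enc_char 3 (bW_idx (c_a C))))
    (enc_str 3 (map bW_idx (c_wr C))))
    (enc_char (nstates M) (c_st C))).

From Stdlib Require Import String Reals ZArith List Arith Lia Lra Psatz IndefiniteDescription.
Import ListNotations.

(* The term [trans_prog M k] starts a self-applied loop on the encoded configuration.
   One round of the loop reads the current input symbol by dropping [n] characters from
   the encoded input tape, where the input-head position [n] is given in reversed binary
   (two recursive drops of [n/2] plus one tail, hence O(n) = O(|i|) steps); the encodings
   of the state, the input symbol and the work symbol then act as selectors among the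
   branches of the transition table. A transition updates the counter by binary successor
   or predecessor, moves the work head by one cons/uncons and re-enters the loop; a final
   state hands its configuration to [k]. Thus [n] machine steps cost O((n+1)|i|)
   reductions, while a run that never halts keeps the loop going forever or, at an
   undefined transition, falls into [omega]. *)

Scheme tm_mut := Induction for tm Sort Prop
with val_mut := Induction for val Sort Prop.
Combined Scheme tm_val_ind from tm_mut, val_mut.

Notation steps := (nsteps det_step).

Lemma det_step_beta t v : det_step (tapp (tval (vlam t)) v) (subst_t 0 v t).
Proof. exact (det_beta hole t v). Qed.

Lemma det_step_app t t' v : det_step t t' -> det_step (tapp t v) (tapp t' v).
Proof. intros H; destruct H. exact (det_beta (eapp E v) t v0). Qed.

Lemma steps_trans m1 m2 t1 t2 t3 :
  steps m1 t1 t2 -> steps m2 t2 t3 -> steps (m1 + m2) t1 t3.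
Proof. induction 1; simpl; intros; auto. econstructor; eauto. Qed.

Lemma steps_app m t t' v : steps m t t' -> steps m (tapp t v) (tapp t' v).
Proof. induction 1; econstructor; eauto using det_step_app. Qed.

Fixpoint apps (t : tm) (vs : list val) : tm :=
  match vs with [] => t | v :: vs' => apps (tapp t v) vs' end.

Lemma apps_app t vs ws : apps t (vs ++ ws) = apps (apps t vs) ws.
Proof. revert t; induction vs; simpl; auto. Qed.

Lemma det_step_apps t t' vs : det_step t t' -> det_step (apps t vs) (apps t' vs).
Proof. revert t t'; induction vs; simpl; intros; auto. apply IHvs, det_step_app; auto. Qed.

Lemma closed_mono :
  (forall t d d', closed_t d t -> d <= d' -> closed_t d' t) /\
  (forall v d d', closed_v d v -> d <= d' -> closed_v d' v).
Proof.
  apply tm_val_ind; simpl; intros.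
  - eapply H; eauto.
  - destruct H1; split; [eapply H|eapply H0]; eauto.
  - lia.
  - eapply H; eauto; lia.
Qed.

Lemma subst_closed :
  (forall t d, closed_t d t -> forall j s, d <= j -> subst_t j s t = t) /\
  (forall v d, closed_v d v -> forall j s, d <= j -> subst_v j s v = v).
Proof.
  apply tm_val_ind; simpl; intros.
  - f_equal; eauto.
  - destruct H1; f_equal; eauto.
  - destruct (Nat.eqb_spec n j); [lia|]. destruct (Nat.ltb_spec j n); [lia|]. auto.
  - f_equal; eapply H; eauto; lia.
Qed.

Lemma shift_closed :
  (forall t d, closed_t d t -> forall k c, d <= c -> shift_t k c t = t) /\
  (forall v d, closed_v d v -> forall k c, d <= c -> shift_v k c v = v).
Proof.
  apply tm_val_ind; simpl; intros.
  - f_equal; eauto.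
  - destruct H1; f_equal; eauto.
  - destruct (Nat.leb_spec c n); [lia|]. auto.
  - f_equal; eapply H; eauto; lia.
Qed.

Lemma subst_shift :
  (forall t j s, subst_t j s (shift_t 1 j t) = t) /\
  (forall v j s, subst_v j s (shift_v 1 j v) = v).
Proof.
  apply tm_val_ind; simpl; intros; try (f_equal; eauto; fail).
  destruct (Nat.leb_spec j n); simpl.
  - destruct (Nat.eqb_spec (n + 1) j); [lia|]. destruct (Nat.ltb_spec j (n + 1)); [|lia].
    f_equal; lia.
  - destruct (Nat.eqb_spec n j); [lia|]. destruct (Nat.ltb_spec j n); [lia|]. auto.
Qed.

Definition closed_val (v : val) : Prop := closed_v 0 v.

Lemma subst_closed_val v j s : closed_val v -> subst_v j s v = v.
Proof. intros H; eapply (proj2 subst_closed); eauto; lia. Qed.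

Lemma shift_closed_val v k c : closed_val v -> shift_v k c v = v.
Proof. intros H; eapply (proj2 shift_closed); eauto; lia. Qed.

Lemma closed_val_mono v d : closed_val v -> closed_v d v.
Proof. intros H; eapply (proj2 closed_mono); eauto; lia. Qed.

Lemma closed_lams m d t : closed_t (m + d) t -> closed_t d (lams m t).
Proof. revert d; induction m; simpl; intros; auto. apply IHm. rewrite Nat.add_succ_r; auto. Qed.

Lemma closed_apps d t vs : closed_t d t -> Forall (closed_v d) vs -> closed_t d (apps t vs).
Proof.
  revert t; induction vs; simpl; intros t H1 H2; auto. inversion H2; subst. apply IHvs; simpl; auto.
Qed.

Lemma closed_enc_str p l : closed_val (enc_str p l).
Proof.
  unfold closed_val; induction l; simpl; apply closed_lams; simpl; [lia|].
  split; [lia|]. apply (proj2 closed_mono) with 0; auto; lia.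
Qed.

Lemma closed_enc_char p j : closed_val (enc_char p j).
Proof. unfold closed_val, enc_char; simpl. apply closed_lams. simpl. lia. Qed.

Lemma closed_enc_config M C : closed_val (enc_config M C).
Proof.
  unfold closed_val, enc_config; cbn [closed_v closed_t].
  repeat split; try lia; apply closed_val_mono; auto using closed_enc_str, closed_enc_char.
Qed.

Create HintDb closed_db.
Hint Resolve closed_enc_str closed_enc_char closed_enc_config : closed_db.

Lemma subst_lams m j v t : closed_val v ->
  subst_t j v (lams m t) = lams m (subst_t (m + j) v t).
Proof.
  intros Hv; revert j; induction m; intros j; simpl; auto.
  rewrite (shift_closed_val v 1 0 Hv), IHm. replace (m + S j) with (S (m + j)) by lia; reflexivity.
Qed.

Lemma subst_apps j v t vs : subst_t j v (apps t vs) = apps (subst_t j v t) (map (subst_v j v) vs).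
Proof. revert t; induction vs; simpl; intros; auto. Qed.

Lemma map_subst_closed j v vs : Forall closed_val vs -> map (subst_v j v) vs = vs.
Proof. induction 1; simpl; auto. rewrite subst_closed_val; auto. f_equal; auto. Qed.

Ltac simpl_closed_subst :=
  repeat match goal with
  | |- context [subst_v ?j ?s ?v] => rewrite (subst_closed_val v j s) by (auto with closed_db)
  | |- context [shift_v ?k ?c ?v] => rewrite (shift_closed_val v k c) by (auto with closed_db)
  end.

Ltac simpl_subst :=
  cbn [subst_t subst_v shift_t shift_v Nat.eqb Nat.ltb Nat.leb Nat.add Nat.sub apps
       c_in c_pos c_wl c_a c_wr c_st];
  simpl_closed_subst.

Ltac reduce_redex := match goal with
  | |- det_step (tapp (tval _) _) _ => apply det_step_beta
  | |- det_step (tapp _ _) _ => apply det_step_app; reduce_redex end.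

Ltac solve_closed := unfold closed_val; cbn [closed_v closed_t Nat.sub];
  repeat match goal with |- _ /\ _ => split end;
  try lia; try (apply closed_val_mono; auto with closed_db).

(** * Encoded data as selectors *)

Lemma steps_lams_discard m t vs rest :
  length vs = m -> Forall closed_val vs -> closed_t 0 t ->
  steps m (apps (lams m t) (vs ++ rest)) (apps t rest).
Proof.
  revert vs; induction m; intros vs Hl Hc Ht.
  - destruct vs; [|discriminate]. constructor.
  - destruct vs as [|w vs]; [discriminate|]. inversion Hc; subst. simpl.
    eapply nstepsS. { apply det_step_apps, det_step_beta. }
    rewrite subst_lams by auto. rewrite (proj1 subst_closed t 0 Ht) by lia.
    apply IHm; auto.
Qed.

Lemma steps_select_var m x vs rest d :
  length vs = S m -> x <= m -> Forall closed_val vs ->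
  steps (S m) (apps (tval (vlam (lams m (tval (vvar x))))) (vs ++ rest))
              (apps (tval (nth (m - x) vs d)) rest).
Proof.
  revert x vs; induction m; intros x vs Hl Hx Hc.
  - destruct vs as [|w [|]]; try discriminate. assert (x = 0) by lia; subst.
    cbn [apps app]. eapply nstepsS. { apply det_step_apps, det_step_beta. } constructor.
  - destruct vs as [|w vs]; [discriminate|]. inversion Hc; subst. cbn [apps app].
    eapply nstepsS. { apply det_step_apps, det_step_beta. }
    rewrite subst_lams by auto. cbn [subst_t subst_v].
    destruct (Nat.eqb_spec x (S m + 0)).
    + subst. replace (S m - (S m + 0)) with 0 by lia.
      apply (steps_lams_discard (S m) (tval w) vs rest); auto.
    + destruct (Nat.ltb_spec (S m + 0) x); [lia|].
      replace (S m - x) with (S (m - x)) by lia.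
      apply IHm; auto; simpl in Hl; lia.
Qed.

Lemma steps_select_app m x w vs rest d :
  length vs = S m -> x <= m -> Forall closed_val vs -> closed_val w ->
  steps (S m) (apps (tval (vlam (lams m (tapp (tval (vvar x)) w)))) (vs ++ rest))
              (apps (tval (nth (m - x) vs d)) (w :: rest)).
Proof.
  revert x vs; induction m; intros x vs Hl Hx Hc Hw.
  - destruct vs as [|u [|]]; try discriminate. assert (x = 0) by lia; subst.
    cbn [apps app]. eapply nstepsS. { apply det_step_apps, det_step_beta. } simpl.
    rewrite (subst_closed_val w _ _ Hw). constructor.
  - destruct vs as [|u vs]; [discriminate|]. inversion Hc; subst. cbn [apps app].
    eapply nstepsS. { apply det_step_apps, det_step_beta. }
    rewrite subst_lams by auto. cbn [subst_t subst_v]. rewrite (subst_closed_val w _ _ Hw).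
    destruct (Nat.eqb_spec x (S m + 0)).
    + subst. replace (S m - (S m + 0)) with 0 by lia.
      apply (steps_lams_discard (S m) (tapp (tval u) w) vs rest); auto. simpl; split; auto.
    + destruct (Nat.ltb_spec (S m + 0) x); [lia|].
      replace (S m - x) with (S (m - x)) by lia.
      apply IHm; auto; simpl in Hl; lia.
Qed.

Lemma steps_enc_char p j vs rest : length vs = p -> j < p -> Forall closed_val vs ->
  steps p (apps (tval (enc_char p j)) (vs ++ rest)) (apps (tval (nth j vs (vvar 0))) rest).
Proof.
  intros Hl Hj Hc. unfold enc_char.
  destruct p as [|p]; [lia|]. rewrite Nat.sub_succ, Nat.sub_0_r.
  replace j with (p - (p - j)) at 2 by lia.
  apply steps_select_var; auto. lia.
Qed.

Lemma steps_enc_str_cons p j r vs rest : length vs = S p -> j < p -> Forall closed_val vs ->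
  steps (S p) (apps (tval (enc_str p (j :: r))) (vs ++ rest))
              (apps (tval (nth j vs (vvar 0))) (enc_str p r :: rest)).
Proof.
  intros Hl Hj Hc. cbn [enc_str].
  replace j with (p - (p - j)) at 2 by lia.
  apply steps_select_app; auto using closed_enc_str. lia.
Qed.

Lemma steps_enc_str_nil p vs rest : length vs = S p -> Forall closed_val vs ->
  steps (S p) (apps (tval (enc_str p [])) (vs ++ rest)) (apps (tval (nth p vs (vvar 0))) rest).
Proof.
  intros Hl Hc. cbn [enc_str].
  replace p with (p - 0) at 3 by lia.
  apply steps_select_var; auto. lia.
Qed.

Definition red_le (B : nat) (t t' : tm) : Prop := exists m, m <= B /\ steps m t t'.

Lemma red_le_step B t t1 t' : det_step t t1 -> red_le B t1 t' -> red_le (S B) t t'.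
Proof. intros H [m [Hm Hs]]. exists (S m); split; [lia|]. econstructor; eauto. Qed.

Lemma red_le_trans B1 B2 t1 t2 t3 : red_le B1 t1 t2 -> red_le B2 t2 t3 -> red_le (B1 + B2) t1 t3.
Proof. intros [m1 [H1 S1]] [m2 [H2 S2]]. exists (m1 + m2); split; [lia|]. eapply steps_trans; eauto. Qed.

Lemma red_le_refl t : red_le 0 t t.
Proof. exists 0; split; auto; constructor. Qed.

Lemma red_le_mono B B' t t' : red_le B t t' -> B <= B' -> red_le B' t t'.
Proof. intros [m [H1 S1]] H; exists m; split; auto; lia. Qed.

Lemma red_le_steps m t t' : steps m t t' -> red_le m t t'.
Proof. intros; exists m; auto. Qed.

Ltac red_beta := eapply red_le_step; [ reduce_redex | simpl_subst ].

Ltac spine t := match t with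
  | tapp ?f ?a => let r := spine f in
      match r with (?h, ?l) => constr:((h, l ++ [a])) end
  | tval ?h => constr:((h, @nil val)) end.

Ltac to_apps := match goal with |- red_le _ ?t _ =>
   let r := spine t in match r with (?h, ?l) =>
    let l' := eval cbn [app] in l in change t with (apps (tval h) l') end end.

(* Splits the argument spine of the goal's left-hand side after [k] arguments and applies [lem]. *)
Ltac select_with lem k :=
  match goal with |- red_le _ ?t _ =>
   let r := spine t in match r with (?h, ?l) =>
    let l' := eval cbn [app] in l in
    let vs := eval cbn [firstn] in (firstn k l') in
    let rs := eval cbn [skipn] in (skipn k l') in
    change t with (apps (tval h) (vs ++ rs));
    eapply red_le_trans;
    [ apply red_le_steps; eapply lem;
      first [reflexivity | lia | repeat constructor; solve_closed]
    | cbn [nth apps] ] end end.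

Ltac select_nil p := select_with (@steps_enc_str_nil p) (S p).
Ltac select_cons p := select_with (@steps_enc_str_cons p) (S p).
Ltac select_char p := select_with (@steps_enc_char p) p.

(** * A named-variable front end *)

Open Scope string_scope.

Inductive named : Type :=
| NVar (x : string)
| NLam (x : string) (b : named)
| NApp (f a : named)
| NConst (v : val).

Fixpoint index_of (x : string) (env : list string) : option nat :=
  match env with
  | [] => None
  | y :: env' => if String.eqb x y then Some 0 else option_map S (index_of x env')
  end.

(* Only values may stand in argument position, as in the grammar t ::= v | t v. *)
Fixpoint compile_tm (env : list string) (t : named) : option tm :=
  match t with
  | NApp f a =>
      match compile_tm env f, compile_val env a with
      | Some f', Some a' => Some (tapp f' a')
      | _, _ => None
      end
  | NVar x => option_map (fun n => tval (vvar n)) (index_of x env)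
  | NLam x b => option_map (fun b' => tval (vlam b')) (compile_tm (x :: env) b)
  | NConst v => Some (tval v)
  end
with compile_val (env : list string) (t : named) : option val :=
  match t with
  | NVar x => option_map vvar (index_of x env)
  | NLam x b => option_map vlam (compile_tm (x :: env) b)
  | NConst v => Some v
  | NApp _ _ => None
  end.

Fixpoint nlams (xs : list string) (b : named) : named :=
  match xs with [] => b | x :: xs' => NLam x (nlams xs' b) end.

Notation "f @ a" := (NApp f a) (at level 40, left associativity).
Notation "'λ' xs , b" := (nlams xs b) (at level 200, xs at level 0).
Coercion NVar : string >-> named.

Ltac compile t :=
  let r := eval cbv beta iota zeta delta
             [compile_val compile_tm index_of nlams option_map String.eqb Ascii.eqb Bool.eqb]
           in (compile_val [] t) in
  lazymatch r with Some ?v => exact v end.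

Notation nbit0 r := (λ ["x0";"x1";"xe"], "x0" @ r).
Notation nbit1 r := (λ ["x0";"x1";"xe"], "x1" @ r).

(** * Counters in reversed binary *)

(* Recursive programs receive themselves as first argument ("self"). *)
Definition succ_prog : val := ltac:(compile (
  λ ["self";"bits";"k"], "bits"
     @ (λ ["r";"self";"k"], "k" @ nbit1 "r")
     @ (λ ["r";"self";"k"], "self" @ "self" @ "r" @ (λ ["r'"], "k" @ nbit0 "r'"))
     @ (λ ["self";"k"], "k" @ NConst (enc_str 2 [1]))
     @ "self" @ "k")).

Definition pred_prog : val := ltac:(compile (
  λ ["self";"bits";"k"], "bits"
     @ (λ ["r";"self";"k"], "self" @ "self" @ "r" @ (λ ["r'"], "k" @ nbit1 "r'"))
     @ (λ ["r";"self";"k"], "r" @ (λ ["q";"k";"r"], "k" @ nbit0 "r")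
                               @ (λ ["q";"k";"r"], "k" @ nbit0 "r")
                               @ (λ ["k";"r"], "k" @ NConst (enc_str 2 []))
                               @ "k" @ "r")
     @ (λ ["self";"k"], "k" @ NConst (enc_str 2 []))
     @ "self" @ "k")).

Definition tail_prog : val := ltac:(compile (λ ["l";"k"], "l" @ "k" @ "k" @ "k" @ "k" @ "k")).

(* Drops [2 m + b] characters from a string as two recursive drops of [m] plus [b] tails. *)
Definition drop_prog : val := ltac:(compile (
  λ ["self";"bits";"l";"k"], "bits"
     @ (λ ["r";"self";"l";"k"], "self" @ "self" @ "r" @ "l"
                                  @ (λ ["l1"], "self" @ "self" @ "r" @ "l1" @ "k"))
     @ (λ ["r";"self";"l";"k"], "self" @ "self" @ "r" @ "l"
                                  @ (λ ["l1"], "self" @ "self" @ "r" @ "l1"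
                                       @ (λ ["l2"], NConst tail_prog @ "l2" @ "k")))
     @ (λ ["self";"l";"k"], "k" @ "l")
     @ "self" @ "l" @ "k")).

Close Scope string_scope.

Lemma closed_succ_prog : closed_val succ_prog. Proof. unfold succ_prog; solve_closed. Qed.
Lemma closed_pred_prog : closed_val pred_prog. Proof. unfold pred_prog; solve_closed. Qed.
Lemma closed_tail_prog : closed_val tail_prog. Proof. unfold tail_prog; solve_closed. Qed.
Hint Resolve closed_succ_prog closed_pred_prog closed_tail_prog : closed_db.
Lemma closed_drop_prog : closed_val drop_prog. Proof. unfold drop_prog; solve_closed. Qed.
Hint Resolve closed_drop_prog : closed_db.

Fixpoint bits_succ (l : list nat) : list nat :=
  match l with [] => [1] | 0 :: r => 1 :: r | _ :: r => 0 :: bits_succ r end.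

Fixpoint bits_pred (l : list nat) : list nat :=
  match l with
  | [] => []
  | 0 :: r => 1 :: bits_pred r
  | _ :: r => match r with [] => [] | _ => 0 :: r end
  end.

Fixpoint bits_val (l : list nat) : nat := match l with [] => 0 | b :: r => b + 2 * bits_val r end.

Fixpoint drop_cost (l : list nat) : nat := match l with [] => 30 | _ :: r => 2 * drop_cost r + 30 end.

Lemma succ_prog_spec bits k : Forall (fun j => j < 2) bits -> closed_val k ->
  red_le (10 * (length bits + 1)) (apps (tval succ_prog) [succ_prog; enc_str 2 bits; k])
         (tapp (tval k) (enc_str 2 (bits_succ bits))).
Proof.
  revert k; induction bits as [|b r IH]; intros k Hb Hk.
  - eapply red_le_mono; [cbn [apps]; do 3 red_beta; select_nil 2; do 2 red_beta;
                         apply red_le_refl | simpl; lia].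
  - inversion Hb; subst. destruct b as [|[|b]]; [| |lia].
    + eapply red_le_mono; [cbn [apps]; do 3 red_beta; select_cons 2; do 3 red_beta;
                           apply red_le_refl | simpl; lia].
    + eapply red_le_mono. cbn [apps]. do 3 red_beta. select_cons 2. do 3 red_beta.
      eapply red_le_trans. { apply IH; auto. solve_closed. }
      red_beta. apply red_le_refl. simpl; lia.
Qed.

Lemma pred_prog_spec bits k : Forall (fun j => j < 2) bits -> closed_val k ->
  red_le (20 * (length bits + 1)) (apps (tval pred_prog) [pred_prog; enc_str 2 bits; k])
         (tapp (tval k) (enc_str 2 (bits_pred bits))).
Proof.
  revert k; induction bits as [|b r IH]; intros k Hb Hk.
  - eapply red_le_mono; [cbn [apps]; do 3 red_beta; select_nil 2; do 2 red_beta;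
                         apply red_le_refl | simpl; lia].
  - inversion Hb; subst. destruct b as [|[|b]]; [| |lia].
    + eapply red_le_mono. cbn [apps]. do 3 red_beta. select_cons 2. do 3 red_beta.
      eapply red_le_trans. { apply IH; auto. solve_closed. }
      red_beta. apply red_le_refl. simpl; lia.
    + destruct r as [|j r2].
      * eapply red_le_mono; [cbn [apps]; do 3 red_beta; select_cons 2; do 3 red_beta;
          select_nil 2; do 2 red_beta; apply red_le_refl | simpl; lia].
      * inversion H2; subst. destruct j as [|[|j]]; [| |lia].
        all: eapply red_le_mono; [cbn [apps]; do 3 red_beta; select_cons 2; do 3 red_beta;
           select_cons 2; do 3 red_beta; apply red_le_refl | simpl; lia].
Qed.

Lemma Forall_skipn {A} (P : A -> Prop) n l : Forall P l -> Forall P (skipn n l).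
Proof. revert l; induction n; intros [|x l] H; simpl; auto. inversion H; auto. Qed.

Lemma skipn_S_of_cons {A} n (l : list A) x rest : skipn n l = x :: rest -> skipn (S n) l = rest.
Proof.
  intros E. change (S n) with (1 + n). rewrite <- skipn_skipn, E. reflexivity.
Qed.

Lemma drop_prog_spec bits l k :
  Forall (fun j => j < 2) bits -> Forall (fun j => j < 4) l ->
  bits_val bits <= length l -> closed_val k ->
  red_le (drop_cost bits) (apps (tval drop_prog) [drop_prog; enc_str 2 bits; enc_str 4 l; k])
         (tapp (tval k) (enc_str 4 (skipn (bits_val bits) l))).
Proof.
  revert l k; induction bits as [|b r IH]; intros l k Hb Hl Hv Hk.
  - eapply red_le_mono; [cbn [apps]; do 4 red_beta; select_nil 2; do 3 red_beta;
                         apply red_le_refl | simpl; lia].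
  - inversion Hb; subst. cbn [bits_val] in *.
    assert (Hl2 : Forall (fun j => j < 4) (skipn (bits_val r) l)) by (apply Forall_skipn; auto).
    assert (Hv2 : bits_val r <= length (skipn (bits_val r) l)) by (rewrite length_skipn; lia).
    destruct b as [|[|b]]; [| |lia].
    + eapply red_le_mono. cbn [apps]. do 4 red_beta. select_cons 2. do 4 red_beta.
      eapply red_le_trans. { apply IH; auto. lia. solve_closed. }
      red_beta.
      eapply red_le_trans. { apply IH; auto. }
      rewrite skipn_skipn. replace (bits_val r + bits_val r) with (0 + 2 * bits_val r) by lia.
      apply red_le_refl. simpl; lia.
    + eapply red_le_mono. cbn [apps]. do 4 red_beta. select_cons 2. do 4 red_beta.
      eapply red_le_trans. { apply IH; auto. lia. solve_closed. }
      red_beta.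
      eapply red_le_trans. { apply IH; auto. solve_closed. }
      red_beta. rewrite skipn_skipn.
      assert (Hs : Forall (fun j => j < 4) (skipn (bits_val r + bits_val r) l))
        by (apply Forall_skipn; auto).
      assert (Hlen : length (skipn (bits_val r + bits_val r) l) > 0)
        by (rewrite length_skipn; lia).
      destruct (skipn (bits_val r + bits_val r) l) as [|j rest] eqn:E; [simpl in Hlen; lia|].
      inversion Hs; subst.
      do 2 red_beta. select_cons 4.
      replace (skipn (S (2 * bits_val r)) l) with rest.
      { destruct j as [|[|[|[|j]]]]; [apply red_le_refl..|lia]. }
      replace (S (2 * bits_val r)) with (S (bits_val r + bits_val r)) by lia.
      symmetry; eapply skipn_S_of_cons; eauto.
      simpl; lia.
Qed.

Lemma bin_S n : bin (S n) = pos_bits (Pos.of_succ_nat n).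
Proof. reflexivity. Qed.

Lemma bin_bits n : Forall (fun j => j < 2) (bin n).
Proof.
  assert (H : forall p, Forall (fun j => j < 2) (pos_bits p)) by (induction p; simpl; auto).
  destruct n; [constructor|]. rewrite bin_S. apply H.
Qed.

Lemma bits_val_bin n : bits_val (bin n) = n.
Proof.
  assert (H : forall p, bits_val (pos_bits p) = Pos.to_nat p)
    by (induction p; simpl pos_bits; cbn [bits_val]; rewrite ?IHp; lia).
  destruct n; auto. rewrite bin_S, H. apply SuccNat2Pos.id_succ.
Qed.

Lemma bits_succ_bin n : bits_succ (bin n) = bin (S n).
Proof.
  assert (H : forall p, bits_succ (pos_bits p) = pos_bits (Pos.succ p))
    by (induction p; simpl; auto; rewrite IHp; auto).
  destruct n; auto. rewrite !bin_S, H. reflexivity.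
Qed.

Lemma bits_pred_bin n : bits_pred (bin n) = bin (n - 1).
Proof.
  assert (H : forall p, bits_pred (pos_bits (Pos.succ p)) = pos_bits p).
  { induction p; simpl; auto.
    - rewrite IHp; auto.
    - destruct p; auto. }
  destruct n as [|[|n]]; auto. replace (S (S n) - 1) with (S n) by lia. rewrite !bin_S.
  change (Pos.of_succ_nat (S n)) with (Pos.succ (Pos.of_succ_nat n)). apply H.
Qed.

Lemma length_bin n : length (bin n) <= n.
Proof.
  assert (H : forall p, length (pos_bits p) <= Pos.to_nat p).
  { intros p; induction p; simpl pos_bits; cbn [length];
      rewrite ?Pos2Nat.inj_xO, ?Pos2Nat.inj_xI, ?Pos2Nat.inj_1;
      try pose proof (Pos2Nat.is_pos p); lia. }
  destruct n; simpl; auto. rewrite bin_S.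
  specialize (H (Pos.of_succ_nat n)). rewrite SuccNat2Pos.id_succ in H. lia.
Qed.

Lemma pow_length_bin n : 2 ^ length (bin n) <= 2 * n + 1.
Proof.
  assert (H : forall p, 2 ^ length (pos_bits p) <= 2 * Pos.to_nat p).
  { induction p; simpl pos_bits; cbn [length]; rewrite Nat.pow_succ_r';
      rewrite ?Pos2Nat.inj_xO, ?Pos2Nat.inj_xI, ?Pos2Nat.inj_1; simpl; lia. }
  destruct n; simpl; auto. rewrite bin_S. specialize (H (Pos.of_succ_nat n)).
  rewrite SuccNat2Pos.id_succ in H. lia.
Qed.

(* The cost doubles with each bit of [bin n], so it is linear in [n]. *)
Lemma drop_cost_bin n : drop_cost (bin n) <= 60 * (2 * n + 1).
Proof.
  assert (H : forall l, drop_cost l + 30 = 30 * 2 ^ (S (length l))).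
  { induction l; simpl drop_cost; cbn [length]; rewrite ?Nat.pow_succ_r' in *; simpl; lia. }
  pose proof (H (bin n)). pose proof (pow_length_bin n). rewrite Nat.pow_succ_r' in *. lia.
Qed.

(** * The simulating loop *)

Open Scope string_scope.

Notation ncfg i bn wl a wr s := (λ ["xcfg"], "xcfg" @ i @ bn @ wl @ a @ wr @ s).
Notation ncons3 a w :=
  (λ ["y0";"y1";"y2";"ye"], (match a with W0 => NVar "y0" | W1 => NVar "y1" | WB => NVar "y2" end) @ w).
Notation nomega := ((λ ["z"], "z" @ "z") @ (λ ["z"], "z" @ "z")).

(* Branches taken on the right work tape [w_r] when the head moves right, writing [a']
   and entering the state encoded by [S']; [j] is the symbol read from [w_r]. *)
Definition move_right_cons (a' : bW) (S' : val) (j : nat) : val :=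
  ltac:(let F := constr:(fun a : bW =>
          λ ["w";"self";"i";"bn";"wl"],
            "self" @ "self" @ ncfg "i" "bn" (ncons3 a "wl") (NConst (enc_char 3 j)) "w" (NConst S'))
        in destruct a'; [compile (F W0) | compile (F W1) | compile (F WB)]).

Definition move_right_nil (a' : bW) (S' : val) : val :=
  ltac:(let F := constr:(fun a : bW =>
          λ ["self";"i";"bn";"wl"],
            "self" @ "self" @ ncfg "i" "bn" (ncons3 a "wl") (NConst (enc_char 3 2))
                                   (NConst (enc_str 3 [])) (NConst S'))
        in destruct a'; [compile (F W0) | compile (F W1) | compile (F WB)]).

Definition move_left_cons (a' : bW) (S' : val) (j : nat) : val :=
  ltac:(let F := constr:(fun a : bW =>
          λ ["w";"self";"i";"bn";"wr"],
            "self" @ "self" @ ncfg "i" "bn" "w" (NConst (enc_char 3 j)) (ncons3 a "wr") (NConst S'))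
        in destruct a'; [compile (F W0) | compile (F W1) | compile (F WB)]).

Definition move_left_nil (a' : bW) (S' : val) : val :=
  ltac:(let F := constr:(fun a : bW =>
          λ ["self";"i";"bn";"wr"],
            "self" @ "self" @ ncfg "i" "bn" (NConst (enc_str 3 [])) (NConst (enc_char 3 2))
                                   (ncons3 a "wr") (NConst S'))
        in destruct a'; [compile (F W0) | compile (F W1) | compile (F WB)]).

Definition nmove (mu : wmove) (a' : bW) (S' : val) : named :=
  match mu with
  | MStay => λ ["bn2"], "self" @ "self"
                @ ncfg "i" "bn2" "wl" (NConst (enc_char 3 (bW_idx a'))) "wr" (NConst S')
  | MRight => λ ["bn2"], "wr" @ NConst (move_right_cons a' S' 0) @ NConst (move_right_cons a' S' 1)
                  @ NConst (move_right_cons a' S' 2) @ NConst (move_right_nil a' S')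
                  @ "self" @ "i" @ "bn2" @ "wl"
  | MLeft => λ ["bn2"], "wl" @ NConst (move_left_cons a' S' 0) @ NConst (move_left_cons a' S' 1)
                  @ NConst (move_left_cons a' S' 2) @ NConst (move_left_nil a' S')
                  @ "self" @ "i" @ "bn2" @ "wr"
  end.

Definition nhead (d : idir) (K : named) : named :=
  match d with
  | Dp1 => NConst succ_prog @ NConst succ_prog @ "bn" @ K
  | Dm1 => NConst pred_prog @ NConst pred_prog @ "bn" @ K
  | D0 => K @ "bn"
  end.

Ltac compile_action t := let t := eval cbv beta iota delta [nhead nmove] in t in compile t.

Definition act_prog (d : idir) (mu : wmove) (a' : bW) (S' : val) : val :=
  ltac:(let F := constr:(fun d mu => λ ["self";"i";"bn";"wl";"wr"], nhead d (nmove mu a' S')) in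
        destruct d, mu;
        [ compile_action (F Dm1 MLeft) | compile_action (F Dm1 MRight) | compile_action (F Dm1 MStay)
        | compile_action (F D0 MLeft) | compile_action (F D0 MRight) | compile_action (F D0 MStay)
        | compile_action (F Dp1 MLeft) | compile_action (F Dp1 MRight) | compile_action (F Dp1 MStay) ]).

Definition stuck_prog : val := ltac:(compile (λ ["self";"i";"bn";"wl";"wr"], nomega)).

Definition action_prog (N : nat) (o : option (idir * bW * wmove * nat)) : val :=
  match o with
  | None => stuck_prog
  | Some (d, a', mu, s') => act_prog d mu a' (enc_char N s')
  end.

Definition work_branch (A0 A1 A2 : val) : val := ltac:(compile (
  λ ["rest";"self";"i";"bn";"wl";"a";"wr"],
    "a" @ NConst A0 @ NConst A1 @ NConst A2 @ "self" @ "i" @ "bn" @ "wl" @ "wr")).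

(* Taken only on an empty input suffix, which cannot occur: the input head stays on the tape. *)
Definition input_end_branch : val := ltac:(compile (λ ["rest"], "rest")).

Definition nonfinal_branch (H0 H1 H2 H3 : val) : val := ltac:(compile (
  λ ["self";"i";"bn";"wl";"a";"wr";"suf"],
    "suf" @ NConst H0 @ NConst H1 @ NConst H2 @ NConst H3 @ NConst input_end_branch
          @ "self" @ "i" @ "bn" @ "wl" @ "a" @ "wr")).

Definition final_branch (S : val) : val := ltac:(compile (
  λ ["self";"i";"bn";"wl";"a";"wr";"suf"], λ ["y"], "y" @ ncfg "i" "bn" "wl" "a" "wr" (NConst S))).

Definition input_branch (M : TM) (q : nat) (b : bI) : val :=
  work_branch (action_prog (nstates M) (delta M b W0 q)) (action_prog (nstates M) (delta M b W1 q))
              (action_prog (nstates M) (delta M b WB q)).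

Definition state_branch (M : TM) (q : nat) : val :=
  if orb (Nat.eqb q (s_T M)) (Nat.eqb q (s_F M)) then final_branch (enc_char (nstates M) q)
  else nonfinal_branch (input_branch M q I0) (input_branch M q I1)
                       (input_branch M q IL) (input_branch M q IR).

Definition state_dispatch (M : TM) : val :=
  vlam (apps (tval (vvar 0)) (map (state_branch M) (seq 0 (nstates M)))).

Definition loop_body (sd : val) : val := ltac:(compile (
  λ ["i";"bn";"wl";"a";"wr";"s";"self"], NConst drop_prog @ NConst drop_prog @ "bn" @ "i"
     @ (λ ["suf"], NConst sd @ "s" @ "self" @ "i" @ "bn" @ "wl" @ "a" @ "wr" @ "suf"))).

Definition loop_step (sd : val) : val :=
  ltac:(compile (λ ["self";"c"], "c" @ NConst (loop_body sd) @ "self")).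

Definition loop_prog (M : TM) : val := loop_step (state_dispatch M).

Close Scope string_scope.

Lemma closed_move_right_cons a' S' j : closed_val S' -> closed_val (move_right_cons a' S' j).
Proof. intros; destruct a'; unfold move_right_cons; solve_closed. Qed.
Lemma closed_move_right_nil a' S' : closed_val S' -> closed_val (move_right_nil a' S').
Proof. intros; destruct a'; unfold move_right_nil; solve_closed. Qed.
Lemma closed_move_left_cons a' S' j : closed_val S' -> closed_val (move_left_cons a' S' j).
Proof. intros; destruct a'; unfold move_left_cons; solve_closed. Qed.
Lemma closed_move_left_nil a' S' : closed_val S' -> closed_val (move_left_nil a' S').
Proof. intros; destruct a'; unfold move_left_nil; solve_closed. Qed.
Hint Resolve closed_move_right_cons closed_move_right_nil closed_move_left_cons
             closed_move_left_nil : closed_db.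

Lemma closed_act_prog d mu a' S' : closed_val S' -> closed_val (act_prog d mu a' S').
Proof. intros; destruct d, mu; unfold act_prog; solve_closed. Qed.
Lemma closed_stuck_prog : closed_val stuck_prog. Proof. unfold stuck_prog; solve_closed. Qed.
Hint Resolve closed_act_prog closed_stuck_prog : closed_db.

Lemma closed_action_prog N o : closed_val (action_prog N o).
Proof. destruct o as [[[[d a'] mu] s']|]; simpl; auto with closed_db. Qed.
Hint Resolve closed_action_prog : closed_db.

Lemma closed_work_branch A0 A1 A2 :
  closed_val A0 -> closed_val A1 -> closed_val A2 -> closed_val (work_branch A0 A1 A2).
Proof. intros; unfold work_branch; solve_closed. Qed.
Lemma closed_input_end_branch : closed_val input_end_branch.
Proof. unfold input_end_branch; solve_closed. Qed.
Hint Resolve closed_work_branch closed_input_end_branch : closed_db.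

Lemma closed_nonfinal_branch H0 H1 H2 H3 : closed_val H0 -> closed_val H1 -> closed_val H2 ->
  closed_val H3 -> closed_val (nonfinal_branch H0 H1 H2 H3).
Proof. intros; unfold nonfinal_branch; solve_closed. Qed.
Lemma closed_final_branch S : closed_val S -> closed_val (final_branch S).
Proof. intros; unfold final_branch; solve_closed. Qed.
Hint Resolve closed_nonfinal_branch closed_final_branch : closed_db.

Lemma closed_input_branch M q b : closed_val (input_branch M q b).
Proof. unfold input_branch; auto with closed_db. Qed.
Hint Resolve closed_input_branch : closed_db.

Lemma closed_state_branch M q : closed_val (state_branch M q).
Proof. unfold state_branch; destruct orb; auto with closed_db. Qed.
Hint Resolve closed_state_branch : closed_db.

Lemma closed_state_branches M : Forall closed_val (map (state_branch M) (seq 0 (nstates M))).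
Proof.
  apply Forall_forall. intros x Hx. apply in_map_iff in Hx. destruct Hx as [q [<- _]].
  apply closed_state_branch.
Qed.

Lemma closed_state_dispatch M : closed_val (state_dispatch M).
Proof.
  unfold closed_val, state_dispatch; simpl. apply closed_apps; [simpl; lia|].
  eapply Forall_impl; [|apply closed_state_branches]. intros; apply closed_val_mono; auto.
Qed.
Hint Resolve closed_state_dispatch : closed_db.

Lemma closed_loop_body sd : closed_val sd -> closed_val (loop_body sd).
Proof. intros; unfold loop_body; solve_closed. Qed.
Hint Resolve closed_loop_body : closed_db.
Lemma closed_loop_prog M : closed_val (loop_prog M).
Proof. unfold loop_prog, loop_step; solve_closed. Qed.
Hint Resolve closed_loop_prog : closed_db.

Lemma state_dispatch_select M q rest : q < nstates M ->
  red_le (1 + nstates M) (apps (tval (state_dispatch M)) (enc_char (nstates M) q :: rest))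
         (apps (tval (state_branch M q)) rest).
Proof.
  intros Hq. eapply red_le_step; [cbn [apps]; apply det_step_apps, det_step_beta|].
  rewrite subst_apps, map_subst_closed by apply closed_state_branches. cbn [subst_t subst_v Nat.eqb].
  rewrite <- apps_app. apply red_le_steps.
  replace (state_branch M q) with (nth q (map (state_branch M) (seq 0 (nstates M))) (vvar 0)).
  - apply steps_enc_char; [rewrite length_map, length_seq | | apply closed_state_branches]; auto.
  - rewrite nth_indep with (d' := state_branch M 0) by (rewrite length_map, length_seq; auto).
    rewrite map_nth, seq_nth; auto.
Qed.

Definition loop_at (M : TM) (C : config) : tm := apps (tval (loop_prog M)) [loop_prog M; enc_config M C].

Definition next_config (C : config) (d : idir) (a' : bW) (mu : wmove) (s' : nat) : config :=
  let n' := match d with Dm1 => c_pos C - 1 | D0 => c_pos C | Dp1 => S (c_pos C) end in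
  match move_work (c_wl C) a' (c_wr C) mu with
  | (wl2, a2, wr2) => mkConfig (c_in C) n' wl2 a2 wr2 s'
  end.

Definition step_red_le (B : nat) (t t' : tm) : Prop := exists t1, det_step t t1 /\ red_le B t1 t'.

Lemma step_red_le_red_le B t t' : step_red_le B t t' -> red_le (S B) t t'.
Proof. intros [t1 [H1 H2]]; eapply red_le_step; eauto. Qed.

Lemma step_red_le_trans B1 B2 B t1 t2 t3 :
  step_red_le B1 t1 t2 -> red_le B2 t2 t3 -> B1 + B2 <= B -> step_red_le B t1 t3.
Proof.
  intros [x [H1 H2]] H3 HB; exists x; split; auto.
  eapply red_le_mono; [eapply red_le_trans|]; eauto.
Qed.

Lemma step_red_le_mono B B' t t' : step_red_le B t t' -> B <= B' -> step_red_le B' t t'.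
Proof. intros [x [H1 H2]] H; exists x; split; auto; eapply red_le_mono; eauto. Qed.

Lemma skipn_nth_error {A} n (l : list A) x : nth_error l n = Some x -> skipn n l = x :: skipn (S n) l.
Proof.
  revert l; induction n; intros [|y l] E; simpl in *; try discriminate; auto.
  injection E; intros; subst; auto.
Qed.

Lemma loop_read_state M C b : c_pos C < length (c_in C) -> c_st C < nstates M ->
  nth_error (c_in C) (c_pos C) = Some b ->
  step_red_le (14 + nstates M + drop_cost (bin (c_pos C))) (loop_at M C)
    (apps (tval (state_branch M (c_st C)))
       [loop_prog M; enc_str 4 (map bI_idx (c_in C)); enc_str 2 (bin (c_pos C));
        enc_str 3 (map bW_idx (rev (c_wl C))); enc_char 3 (bW_idx (c_a C));
        enc_str 3 (map bW_idx (c_wr C));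
        enc_str 4 (bI_idx b :: map bI_idx (skipn (S (c_pos C)) (c_in C)))]).
Proof.
  intros Hp Hs Hb. destruct C as [i n wl a wr s]; cbn [c_pos c_in c_st c_wl c_a c_wr] in *.
  unfold loop_at. cbn [apps]. eexists; split. { reduce_redex. } simpl_subst. eapply red_le_mono.
  red_beta. unfold enc_config. do 8 red_beta.
  eapply red_le_trans.
  { apply drop_prog_spec.
    - apply bin_bits.
    - apply Forall_forall; intros x Hx. apply in_map_iff in Hx; destruct Hx as [y [<- _]].
      destruct y; simpl; lia.
    - rewrite bits_val_bin, length_map; lia.
    - solve_closed. }
  red_beta. rewrite bits_val_bin, skipn_map, (skipn_nth_error _ _ _ Hb).
  to_apps. eapply red_le_trans. { apply state_dispatch_select; auto. }
  apply red_le_refl.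
  simpl. lia.
Qed.

Ltac update_head :=
  first [ eapply red_le_trans; [apply pred_prog_spec; [apply bin_bits|solve_closed]|];
          rewrite bits_pred_bin; red_beta
        | eapply red_le_trans; [apply succ_prog_spec; [apply bin_bits|solve_closed]|];
          rewrite bits_succ_bin; red_beta
        | red_beta ].

Ltac move_work_head := repeat lazymatch goal with
  | |- red_le _ (tapp (tapp (tval (loop_prog _)) _) _) _ => fail
  | |- red_le _ ?t _ => let r := spine t in match r with
       | (enc_str 3 [], _) => select_nil 3
       | (enc_str 3 (_ :: _), _) => select_cons 3
       | _ => red_beta end end.

Lemma act_prog_red M C d mu a' s' :
  red_le (40 + 20 * length (bin (c_pos C)))
    (apps (tval (act_prog d mu a' (enc_char (nstates M) s')))
       [loop_prog M; enc_str 4 (map bI_idx (c_in C)); enc_str 2 (bin (c_pos C));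
        enc_str 3 (map bW_idx (rev (c_wl C))); enc_str 3 (map bW_idx (c_wr C))])
    (loop_at M (next_config C d a' mu s')).
Proof.
  destruct C as [i n wl a wr s]; unfold next_config, loop_at; cbn [c_pos c_in c_st c_wl c_a c_wr].
  destruct d, mu; destruct a';
  try (lazymatch goal with |- context [move_work _ _ _ MLeft] => idtac end;
       destruct (rev wl) as [|x w] eqn:E; [|destruct x]);
  try (lazymatch goal with |- context [move_work _ _ _ MRight] => idtac end;
       destruct wr as [|x w]; [|destruct x]);
  (eapply red_le_mono;
   [ cbn [apps]; do 5 red_beta; update_head; cbn [map] in *; move_work_head;
     cbn [move_work]; try rewrite E; unfold enc_config;
     cbn [move_work c_in c_pos c_wl c_a c_wr c_st];
     try rewrite rev_unit; try rewrite rev_involutive; apply red_le_refl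
   | lia ]).
Qed.

Definition return_config (M : TM) (C : config) : val := vlam (tapp (tval (vvar 0)) (enc_config M C)).

Definition self_app : val := vlam (tapp (tval (vvar 0)) (vvar 0)).
Definition omega : tm := tapp (tval self_app) self_app.

Lemma loop_final_red M C b : c_pos C < length (c_in C) -> c_st C < nstates M ->
  nth_error (c_in C) (c_pos C) = Some b -> final M C ->
  step_red_le (22 + nstates M + drop_cost (bin (c_pos C))) (loop_at M C) (tval (return_config M C)).
Proof.
  intros Hp Hs Hb Hf.
  eapply (step_red_le_trans _ 7); [apply loop_read_state; eauto | | lia].
  unfold state_branch. replace (orb _ _) with true.
  2:{ destruct Hf as [H|H]; rewrite H, Nat.eqb_refl; auto. rewrite Bool.orb_true_r; auto. }
  cbn [apps]. do 7 red_beta. apply red_le_refl.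
Qed.

Lemma loop_dispatch_red M C b : c_pos C < length (c_in C) -> c_st C < nstates M ->
  nth_error (c_in C) (c_pos C) = Some b -> ~ final M C ->
  step_red_le (50 + nstates M + drop_cost (bin (c_pos C))) (loop_at M C)
   (apps (tval (action_prog (nstates M) (delta M b (c_a C) (c_st C))))
      [loop_prog M; enc_str 4 (map bI_idx (c_in C)); enc_str 2 (bin (c_pos C));
       enc_str 3 (map bW_idx (rev (c_wl C))); enc_str 3 (map bW_idx (c_wr C))]).
Proof.
  intros Hp Hs Hb Hf.
  eapply (step_red_le_trans _ 36); [apply loop_read_state; eauto | | lia].
  unfold state_branch. replace (orb _ _) with false.
  2:{ unfold final in Hf. destruct (Nat.eqb_spec (c_st C) (s_T M)); [tauto|].
      destruct (Nat.eqb_spec (c_st C) (s_F M)); [tauto|]. auto. }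
  destruct b, (c_a C);
  (eapply red_le_mono;
   [ cbn [apps]; do 7 red_beta; cbn [bI_idx]; select_cons 4; do 7 red_beta;
     cbn [bW_idx]; select_char 3; apply red_le_refl
   | lia ]).
Qed.

Lemma loop_stuck_red M C b : c_pos C < length (c_in C) -> c_st C < nstates M ->
  nth_error (c_in C) (c_pos C) = Some b -> ~ final M C -> delta M b (c_a C) (c_st C) = None ->
  step_red_le (55 + nstates M + drop_cost (bin (c_pos C))) (loop_at M C) omega.
Proof.
  intros Hp Hs Hb Hf Hd.
  eapply (step_red_le_trans _ 5); [apply loop_dispatch_red; eauto | | lia].
  rewrite Hd. cbn [action_prog apps]. do 5 red_beta. apply red_le_refl.
Qed.

Lemma loop_step_red M C b d a' mu s' : c_pos C < length (c_in C) -> c_st C < nstates M ->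
  nth_error (c_in C) (c_pos C) = Some b -> ~ final M C ->
  delta M b (c_a C) (c_st C) = Some (d, a', mu, s') ->
  step_red_le (90 + nstates M + drop_cost (bin (c_pos C)) + 20 * length (bin (c_pos C)))
    (loop_at M C) (loop_at M (next_config C d a' mu s')).
Proof.
  intros Hp Hs Hb Hf Hd.
  eapply step_red_le_trans; [apply loop_dispatch_red; eauto | rewrite Hd; apply act_prog_red | lia].
Qed.

Lemma tm_step_next_config M C D : tm_step M C D -> exists b d a' mu s',
  nth_error (c_in C) (c_pos C) = Some b /\ delta M b (c_a C) (c_st C) = Some (d, a', mu, s') /\
  D = next_config C d a' mu s'.
Proof.
  intros H; inversion H; subst. exists b, d, a', mu, s'. cbn [c_in c_pos c_a c_st].
  split; auto; split; auto.
  unfold next_config; cbn [c_wl c_wr c_pos c_in]. rewrite H3. f_equal.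
  destruct d; simpl in H2; lia.
Qed.

Lemma valid_config_read M C : valid_config M C -> exists b, nth_error (c_in C) (c_pos C) = Some b.
Proof.
  intros [_ [Hp _]]. destruct (nth_error (c_in C) (c_pos C)) eqn:E; eauto.
  apply nth_error_None in E; lia.
Qed.

Lemma valid_config_length M C : valid_config M C -> 2 <= length (c_in C).
Proof. intros [[s' [_ E]] _]. rewrite E; simpl; rewrite length_app; simpl; lia. Qed.

Lemma next_config_tm_step M C b d a' mu s' : valid_config M C -> input_head_stays M ->
  nth_error (c_in C) (c_pos C) = Some b -> delta M b (c_a C) (c_st C) = Some (d, a', mu, s') ->
  tm_step M C (next_config C d a' mu s').
Proof.
  intros HC Hin Hb Hd. destruct C as [i n wl a wr s].
  unfold next_config; cbn [c_wl c_wr c_pos c_in c_a c_st] in *.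
  destruct (move_work wl a' wr mu) as [[wl2 a2] wr2] eqn:Em.
  econstructor; eauto.
  destruct d; simpl; try lia.
  destruct n; [|lia]. exfalso. destruct HC as [[s0 [_ E]] _]. cbn [c_in] in E; subst i.
  simpl in Hb. injection Hb; intros; subst. destruct (Hin _ _ _ _ _ _ _ Hd) as [H1 _]. apply H1; auto.
Qed.

Lemma tm_step_valid_config M C D : valid_TM M -> input_head_stays M ->
  valid_config M C -> tm_step M C D -> valid_config M D.
Proof.
  intros HM Hin HC Hs. destruct (tm_step_next_config _ _ _ Hs) as (b & d & a' & mu & s' & Hb & Hd & ->).
  destruct HM as (_ & _ & _ & HM). destruct (HM _ _ _ _ _ _ _ Hd) as (_ & Hs' & _).
  destruct HC as [[s0 [Hf E]] [Hp Hst]].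
  destruct C as [i n wl a wr s]; unfold next_config; cbn [c_wl c_wr c_pos c_in c_a c_st] in *.
  destruct (move_work wl a' wr mu) as [[wl2 a2] wr2] eqn:Em.
  split; [exists s0; split; auto|]. cbn [c_in c_pos c_st]. split; auto.
  destruct d; try lia. subst i.
  destruct (Nat.eq_dec (S n) (length (IL :: s0 ++ [IR]))); [|lia].
  exfalso. simpl in e. rewrite length_app in e. simpl in e.
  assert (n = S (length s0)) by lia. subst n.
  simpl in Hb. rewrite nth_error_app2, Nat.sub_diag in Hb by lia. injection Hb; intros; subst.
  destruct (Hin _ _ _ _ _ _ _ Hd) as [_ H2]. apply H2; auto.
Qed.

Lemma final_no_tm_step M C D : valid_TM M -> final M C -> ~ tm_step M C D.
Proof.
  intros HM Hf Hs. destruct (tm_step_next_config _ _ _ Hs) as (b & d & a' & mu & s' & Hb & Hd & _).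
  destruct HM as (_ & _ & _ & HM). destruct (HM _ _ _ _ _ _ _ Hd) as (_ & _ & H1 & H2).
  destruct Hf; tauto.
Qed.

(* One simulated step costs O(|i|): reading the input at position [n < |i|] costs O(n). *)
Definition step_cost (M : TM) : nat := 300 + nstates M.

Lemma loop_run_final M : valid_TM M -> input_head_stays M -> forall n C D, valid_config M C ->
  nsteps (tm_step M) n C D -> final M D ->
  step_red_le (step_cost M * length (c_in C) * (n + 1)) (loop_at M C) (tval (return_config M D)).
Proof.
  intros HM Hin n. induction n as [|n IH]; intros C D HC Hn Hf.
  - inversion Hn; subst. destruct (valid_config_read _ _ HC) as [b Hb].
    pose proof HC as [_ [Hp Hs]]. pose proof (valid_config_length _ _ HC).
    eapply step_red_le_mono. { apply (loop_final_red M D b); auto. }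
    pose proof (drop_cost_bin (c_pos D)). unfold step_cost.
    assert (nstates M <= nstates M * length (c_in D)) by nia. nia.
  - inversion Hn; subst. rename y into C1.
    assert (Hnf : ~ final M C) by (intro; eapply final_no_tm_step; eauto).
    destruct (tm_step_next_config _ _ _ H0) as (b & d & a' & mu & s' & Hb & Hd & E).
    pose proof HC as [_ [Hp Hs]]. pose proof (valid_config_length _ _ HC).
    assert (HC1 : valid_config M C1) by (eapply tm_step_valid_config; eauto).
    assert (Hi : c_in C1 = c_in C)
      by (subst C1; unfold next_config; destruct move_work as [[? ?] ?]; auto).
    specialize (IH C1 D HC1 H1 Hf). rewrite Hi in IH.
    eapply step_red_le_trans.
    + apply (loop_step_red M C b d a' mu s'); auto.
    + rewrite <- E. apply step_red_le_red_le, IH.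
    + pose proof (drop_cost_bin (c_pos C)). pose proof (length_bin (c_pos C)). unfold step_cost.
      assert (nstates M <= nstates M * length (c_in C)) by nia. nia.
Qed.

(** * Divergence *)

Definition never_halts (M : TM) (C : config) : Prop :=
  ~ exists n D, nsteps (tm_step M) n C D /\ final M D.

Definition simulates_nonhalting (M : TM) (t : tm) : Prop :=
  (exists C m, valid_config M C /\ never_halts M C /\ steps m t (loop_at M C)) \/
  (exists m, steps m t omega).

Lemma omega_step : det_step omega omega.
Proof. apply det_step_beta. Qed.

Lemma simulates_nonhalting_progress M : valid_TM M -> input_head_stays M ->
  forall t, simulates_nonhalting M t -> exists t', det_step t t' /\ simulates_nonhalting M t'.
Proof.
  intros HM Hin t [(C & m & HC & HN & Hs) | (m & Hs)].
  - destruct m as [|m].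
    + inversion Hs; subst.
      assert (Hnf : ~ final M C)
        by (intro Hf; apply HN; exists 0, C; split; auto; constructor).
      destruct (valid_config_read _ _ HC) as [b Hb]. pose proof HC as [_ [Hp Hst]].
      destruct (delta M b (c_a C) (c_st C)) as [[[[d a'] mu] s']|] eqn:Hd.
      * destruct (loop_step_red M C b d a' mu s' Hp Hst Hb Hnf Hd) as (t1 & H1 & [m1 [_ H2]]).
        exists t1; split; auto. left. exists (next_config C d a' mu s'), m1.
        assert (Hstep : tm_step M C (next_config C d a' mu s'))
          by (eapply next_config_tm_step; eauto).
        split; [eapply tm_step_valid_config; eauto | split; auto].
        intros (n & D & H3 & H4). apply HN. exists (S n), D. split; auto. econstructor; eauto.
      * destruct (loop_stuck_red M C b Hp Hst Hb Hnf Hd) as (t1 & H1 & [m1 [_ H2]]).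
        exists t1; split; auto. right; eauto.
    + inversion Hs; subst. exists y; split; auto. left; eauto.
  - destruct m as [|m].
    + inversion Hs; subst. exists omega; split; [apply omega_step|]. right; exists 0; constructor.
    + inversion Hs; subst. exists y; split; auto. right; eauto.
Qed.

Lemma diverges_of_progress (P : tm -> Prop) :
  (forall t, P t -> exists t', det_step t t' /\ P t') -> forall t, P t -> diverges t.
Proof.
  intros H t0 H0.
  set (next := fun x : {t | P t} =>
         let (t', Ht') := constructive_indefinite_description _ (H (proj1_sig x) (proj2_sig x))
         in exist P t' (proj2 Ht')).
  exists (fun n => proj1_sig (Nat.iter n next (exist P t0 H0))). split; auto. intros n. simpl.
  destruct (Nat.iter n next (exist P t0 H0)) as [x Hx]. unfold next. simpl.
  match goal with |- context [constructive_indefinite_description ?Q ?h] =>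
    destruct (constructive_indefinite_description Q h) as [t' Ht'] end. simpl. tauto.
Qed.

Lemma diverges_app t v : diverges t -> diverges (tapp t v).
Proof.
  intros [f [Hf0 Hf1]]. exists (fun n => tapp (f n) v).
  split; [rewrite Hf0; auto|]. intros; apply det_step_app; auto.
Qed.

Lemma diverges_steps m t t' : steps m t t' -> diverges t' -> diverges t.
Proof.
  induction 1; auto. intros Hd. destruct (IHnsteps Hd) as [f [Hf0 Hf1]].
  exists (fun n => match n with 0 => x | S n' => f n' end). split; auto.
  intros [|k]; simpl; auto. rewrite <- Hf0 in H; auto.
Qed.

Definition trans_prog (M : TM) : tm :=
  tval (vlam (tval (vlam (tapp (tapp (tapp (tval (loop_prog M)) (loop_prog M)) (vvar 0)) (vvar 1))))).

Lemma closed_trans_prog M : closed (trans_prog M).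
Proof. unfold closed, trans_prog; solve_closed. Qed.

Lemma trans_prog_steps M k C :
  steps 2 (tapp (tapp (trans_prog M) k) (enc_config M C)) (tapp (loop_at M C) k).
Proof.
  unfold trans_prog. eapply nstepsS. { apply det_step_app, det_step_beta. } simpl_subst.
  eapply nstepsS. { apply det_step_beta. } simpl_subst.
  rewrite (proj2 subst_shift). constructor.
Qed.

Lemma return_config_step M k D :
  det_step (tapp (tval (return_config M D)) k) (tapp (tval k) (enc_config M D)).
Proof.
  replace (tapp (tval k) (enc_config M D))
    with (subst_t 0 k (tapp (tval (vvar 0)) (enc_config M D))).
  - apply det_step_beta.
  - cbn [subst_t subst_v Nat.eqb]. rewrite subst_closed_val; auto with closed_db.
Qed.

(* A linear bound suffices: [log2 L >= 1] for [L >= 2]. *)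
Lemma INR_le_mul_log2 (m x L : nat) : m <= x * L -> 2 <= L ->
  (INR m <= INR x * INR L * (ln (INR L) / ln 2))%R.
Proof.
  intros Hm HL.
  assert (Hln2 : (0 < ln 2)%R) by (rewrite <- ln_1; apply ln_increasing; lra).
  assert (Hlog : (1 <= ln (INR L) / ln 2)%R).
  { apply (Rmult_le_reg_r (ln 2)); auto. unfold Rdiv. rewrite Rmult_assoc, Rinv_l by lra.
    rewrite Rmult_1_l, Rmult_1_r.
    assert (H2L : (2 <= INR L)%R) by (replace 2%R with (INR 2) by (simpl; lra); apply le_INR; auto).
    destruct (Rle_lt_or_eq_dec 2 (INR L) H2L) as [Hlt|Heq].
    - left. apply ln_increasing; lra.
    - rewrite <- Heq; lra. }
  apply le_INR in Hm. rewrite mult_INR in Hm.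
  assert (0 <= INR x * INR L)%R by (apply Rmult_le_pos; apply pos_INR).
  nra.
Qed.

Theorem mainTheorem9 :
  forall M : TM, valid_TM M -> input_head_stays M ->
  exists trans : tm, closed trans /\
  exists c : nat,
  forall (k : val) (C : config), valid_config M C ->
    (forall (n : nat) (D : config),
        nsteps (tm_step M) n C D -> final M D ->
        exists m : nat,
          nsteps det_step m (tapp (tapp trans k) (enc_config M C))
                            (tapp (tval k) (enc_config M D)) /\
          (INR m <= INR c * INR (n + 1) * INR (length (c_in C))
                    * (ln (INR (length (c_in C))) / ln 2))%R) /\
    ((~ exists (n : nat) (D : config), nsteps (tm_step M) n C D /\ final M D) ->
        diverges (tapp (tapp trans k) (enc_config M C))).
Proof.
  intros M HM Hin. exists (trans_prog M). split; [apply closed_trans_prog|].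
  exists (step_cost M + 3). intros k C HC. pose proof (valid_config_length _ _ HC) as HL. split.
  - intros n D Hn Hf.
    destruct (loop_run_final M HM Hin n C D HC Hn Hf) as (t1 & H1 & m1 & Hm1 & Hs1).
    exists (2 + (S m1 + 1)). split.
    + eapply steps_trans; [apply trans_prog_steps|].
      eapply steps_trans; [apply steps_app; econstructor; eauto|].
      econstructor; [apply return_config_step | constructor].
    + rewrite <- mult_INR. apply INR_le_mul_log2; auto. nia.
  - intros HN. eapply diverges_steps; [apply trans_prog_steps|]. apply diverges_app.
    apply (diverges_of_progress (simulates_nonhalting M)); [apply simulates_nonhalting_progress; auto|].
    left. exists C, 0. split; [|split]; auto. constructor.
Qed.
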